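(* Let $(Q,P)$ be a weakly quasi-lattice ordered group and let $\Lambda$ be a $P$-graph with $\mathrm{FA}(\Lambda)\neq\emptyset$. For any filter $x\in\mathcal{F}(\Lambda)$, the following are equivalent: (1) $x\in\mathcal{X}(\Lambda)$, i.e. $x\cap\mathrm{FA}(\Lambda)\neq\emptyset$; (2) $x\cap\mathrm{FA}(\Lambda)\cap\lambda\Lambda\neq\emptyset$ for all $\lambda\in x$.
   Context: $(Q,P)$ weakly quasi-lattice ordered: $Q$ a discrete group, $P\subseteq Q$ a subsemigroup containing the identity $e$ with $P\cap P^{-1}=\{e\}$, and, with $p\le r$ meaning $pq=r$ for some $q\in P$, any two elements of $P$ with a common upper bound have a least common upper bound. A $P$-graph is a countable small category $\Lambda$ (range/source $r,s$) with a functor $d:\Lambda\to P$ with unique factorisation (if $d(\lambda)=pq$ there are unique $\mu,\nu$ with $\lambda=\mu\nu$, $d(\mu)=p$, $d(\nu)=q$). Write $\lambda\Lambda=\{\lambda\mu: s(\lambda)=r(\mu)\}$, $\mu\preceq\lambda$ iff $\lambda\in\mu\Lambda$. $\mathrm{FA}(\Lambda)$ is the set of $\lambda$ such that for all $\mu\in\lambda\Lambda,\nu\in\Lambda$ there is a finite $J\subseteq\Lambda$ with $\mu\Lambda\cap\nu\Lambda=\bigcup_{\kappa\in J}\kappa\Lambda$. A filter is a nonempty $x\subseteq\Lambda$ that is hereditary ($\lambda\preceq\mu\in x\Rightarrow\lambda\in x$) and directed ($\mu,\nu\in x$ implies some $\lambda\in x$ with $\mu,\nu\preceq\lambda$); $\mathcal{F}(\Lambda)$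 is the set of filters, and $\mathcal{X}(\Lambda)=\{x\in\mathcal{F}(\Lambda): x\cap\mathrm{FA}(\Lambda)\neq\emptyset\}$. *)

From Stdlib Require Import List.
Set Implicit Arguments.

Record WQLOGroup := {
  Q :> Type;
  mul : Q -> Q -> Q;
  e : Q;
  inv : Q -> Q;
  mul_assoc : forall a b c, mul a (mul b c) = mul (mul a b) c;
  mul_e_l : forall a, mul e a = a;
  mul_e_r : forall a, mul a e = a;
  mul_inv_l : forall a, mul (inv a) a = e;
  mul_inv_r : forall a, mul a (inv a) = e;
  P : Q -> Prop;
  P_e : P e;
  P_mul : forall a b, P a -> P b -> P (mul a b);
  P_cap_Pinv : forall a, P a -> P (inv a) -> a = e;
  wqlo : forall p q, P p -> P q ->
    (exists r, P r /\ (exists a, P a /\ mul p a = r) /\ (exists b, P b /\ mul q b = r)) ->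
    exists l, P l /\ (exists a, P a /\ mul p a = l) /\ (exists b, P b /\ mul q b = l) /\
      (forall r, P r -> (exists a, P a /\ mul p a = r) -> (exists b, P b /\ mul q b = r) ->
         exists c, P c /\ mul l c = r)
}.

Definition qle (G : WQLOGroup) (p r : G) : Prop := exists q, P G q /\ mul G p q = r.

(** A P-graph: a countable small category with a degree functor d : Λ -> P
    satisfying unique factorisation.  [Mor] is the set Λ of morphisms
    (objects are identified with their identity morphisms, which lie in Λ);
    composition [comp] is a total function, only meaningful on composable
    pairs (s λ = r μ). *)
Record PGraph (G : WQLOGroup) := {
  Obj : Type;
  Mor : Type;
  rng : Mor -> Obj;
  src : Mor -> Obj;
  idm : Obj -> Mor;
  comp : Mor -> Mor -> Mor;
  rng_id : forall v, rng (idm v) = v;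
  src_id : forall v, src (idm v) = v;
  rng_comp : forall l m, src l = rng m -> rng (comp l m) = rng l;
  src_comp : forall l m, src l = rng m -> src (comp l m) = src m;
  comp_id_l : forall l, comp (idm (rng l)) l = l;
  comp_id_r : forall l, comp l (idm (src l)) = l;
  comp_assoc : forall l m n, src l = rng m -> src m = rng n ->
    comp l (comp m n) = comp (comp l m) n;
  countable_Obj : exists f : Obj -> nat, forall a b, f a = f b -> a = b;
  countable_Mor : exists f : Mor -> nat, forall a b, f a = f b -> a = b;
  deg : Mor -> G;
  deg_P : forall l, P G (deg l);
  deg_id : forall v, deg (idm v) = e G;
  deg_comp : forall l m, src l = rng m -> deg (comp l m) = mul G (deg l) (deg m);
  unique_fact : forall l p q, P G p -> P G q -> deg l = mul G p q ->
    exists m n, src m = rng n /\ l = comp m n /\ deg m = p /\ deg n = q /\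
      forall m' n', src m' = rng n' -> l = comp m' n' -> deg m' = p -> deg n' = q ->
        m' = m /\ n' = n
}.

Section PGraphDefs.
Variables (G : WQLOGroup) (L : PGraph G).

Definition inExt (l k : Mor L) : Prop :=
  exists m, src L l = rng L m /\ k = comp L l m.

Definition preceq (m l : Mor L) : Prop := inExt m l.

Definition FA (l : Mor L) : Prop :=
  forall m n, inExt l m ->
    exists J : list (Mor L),
      forall k, (inExt m k /\ inExt n k) <-> (exists j, In j J /\ inExt j k).

Definition is_filter (x : Mor L -> Prop) : Prop :=
  (exists l, x l) /\
  (forall l m, preceq l m -> x m -> x l) /\
  (forall m n, x m -> x n -> exists l, x l /\ preceq m l /\ preceq n l).

Definition in_X (x : Mor L -> Prop) : Prop :=
  is_filter x /\ exists l, x l /\ FA l.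

End PGraphDefs.

Arguments inExt {G L} l k.
Arguments preceq {G L} m l.
Arguments FA {G L} l.
Arguments is_filter {G L} x.
Arguments in_X {G L} x.


(* FA(Λ) is closed under extension, since μΛ ⊆ λΛ whenever μ ∈ λΛ; so a
   filter meeting FA(Λ) in μ meets it in a common extension of μ and any
   given λ in the filter. *)

Section Extensions.
Context {G : WQLOGroup} {L : PGraph G}.

Lemma inExt_trans {a b c : Mor L} : inExt a b -> inExt b c -> inExt a c.
Proof.
  intros [u [Hu ->]] [w [Hw ->]].
  rewrite (src_comp L a u Hu) in Hw.
  exists (comp L u w). split.
  - rewrite (rng_comp L u w Hw). exact Hu.
  - symmetry. apply comp_assoc; assumption.
Qed.

Lemma FA_inExt {l m : Mor L} : FA l -> inExt l m -> FA m.
Proof.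
  intros Fl Hlm mu nu Hmu.
  apply Fl. exact (inExt_trans Hlm Hmu).
Qed.

End Extensions.

Theorem lemma4p6 (G : WQLOGroup) (L : PGraph G)
  (hFA : exists l : Mor L, FA l)
  (x : Mor L -> Prop) (hx : is_filter x) :
  in_X x <-> (forall l, x l -> exists m, x m /\ FA m /\ inExt l m).
Proof.
  split.
  - intros [_ [m [Hm Fm]]] l Hl.
    destruct hx as [_ [_ Hdir]].
    destruct (Hdir l m Hl Hm) as [k [Hk [Hlk Hmk]]].
    exists k. split; [exact Hk |]. split; [exact (FA_inExt Fm Hmk) | exact Hlk].
  - intros Hext. split; [exact hx |].
    destruct hx as [[l Hl] _].
    destruct (Hext l Hl) as [m [Hm [Fm _]]].
    exists m. split; assumption.
Qed.
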